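(* Let $\kappa$ be a regular infinite cardinal, $I$ a nonempty set, $(S,\Sigma_S)$ a $\kappa$-measurable space separating points. For every $i\in I$ there exists a function $T_i^*:\Omega\to\Delta^\kappa(\Omega,\Sigma_\Omega)$ such that for every $\kappa$-type space $\underline M=\langle M,\Sigma,(T_i)_{i\in I},\theta\rangle$ on $S$ for player set $I$, with $\kappa$-description map $D:M\to\Omega$, and every $m\in M$, $T_i^*(D(m))(A)=T_i(m)(D^{-1}(A))$ for all $A\in\Sigma_\Omega$.
   Context: A $\kappa$-field on a nonempty set is a field closed under intersections of fewer than $\kappa$ members. $\Delta^\kappa(M,\Sigma)$ is the set of finitely additive probability measures on $(M,\Sigma)$ with the $\kappa$-field generated by the sets $\{\mu:\mu(E)\ge p\}$. ''Separating points'': for $s\neq s'$ in $S$ some $E\in\Sigma_S$ contains $s$ but not $s'$. A $\kappa$-type space on $S$ for $I$ is $\langle M,\Sigma,(T_i)_{i\in I},\theta\rangle$ with $\Sigma$ a $\kappa$-field on nonempty $M$, each $T_i:M\to\Delta^\kappa(M,\Sigma)$ measurable with: $\{m':T_i(m')=T_i(m)\}\subseteq A\in\Sigma$ implies $T_i(m)(A)=1$; and $\theta:M\to S$ measurable. $\kappa$-expressions $\Phi^\kappa$: least set containing each $E\in\Sigma_S$ and closed under $\neg$, $B_i^p$ ($i\in I$, $p\in[0,1]$), and conjunctions $\bigwedge_{\varphi\in\Psi}\varphi$ of nonempty $\Psi$ with $|\Psi|<\kappa$. Semantics: $E^{\underline M}=\theta^{-1}(E)$, complement, $(B_i^p\varphi)^{\underline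 M}=\{m:T_i(m)(\varphi^{\underline M})\ge p\}$, intersection. $D(m)=\{\varphi:m\in\varphi^{\underline M}\}$. $\Omega$ is the set of all $D(m)$ for all states of all $\kappa$-type spaces on $S$ for $I$; $[\varphi]=\{\omega\in\Omega:\varphi\in\omega\}$; $\Sigma_\Omega=\{[\varphi]:\varphi\in\Phi^\kappa\}$ (a $\kappa$-field on $\Omega$). *)

From Stdlib Require Import Reals.
Open Scope R_scope.

(** A cardinal kappa is represented by a type [K] of cardinality kappa.
    A subset [P] of [K] has cardinality < kappa iff [K] does not inject
    into [P]. Every set of size < kappa is (up to bijection) a subset of K,
    so families of fewer than kappa members are indexed by small [P : K -> Prop]. *)

Definition injective_fun {A B : Type} (f : A -> B) : Prop :=
  forall x y, f x = f y -> x = y.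

Definition small {K : Type} (P : K -> Prop) : Prop :=
  ~ exists g : K -> sig P, injective_fun g.

Definition infinite_card (K : Type) : Prop :=
  exists g : nat -> K, injective_fun g.

Definition regular_card (K : Type) : Prop :=
  forall (P : K -> Prop) (Q : sig P -> K -> Prop),
    small P -> (forall j, small (Q j)) ->
    small (fun k => exists j, Q j k).

Definition regular_infinite_card (K : Type) : Prop :=
  infinite_card K /\ regular_card K.

Definition kfield (K : Type) {X : Type} (F : (X -> Prop) -> Prop) : Prop :=
  F (fun _ => True) /\
  (forall A, F A -> F (fun x => ~ A x)) /\
  (forall (P : K -> Prop) (A : sig P -> X -> Prop),
      (exists k, P k) -> small P -> (forall j, F (A j)) ->
      F (fun x => forall j, A j x)).

Definition kfield_gen (K : Type) {X : Type} (G : (X -> Prop) -> Prop)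
  : (X -> Prop) -> Prop :=
  fun B => forall F, kfield K F -> (forall A, G A -> F A) -> F B.

(** * Finitely additive probability measures on (M, Sig).
    A measure is a function on subsets of M; only its values on Sig matter. *)
Definition fa_prob {M : Type} (Sig : (M -> Prop) -> Prop) (mu : (M -> Prop) -> R)
  : Prop :=
  mu (fun _ => True) = 1 /\
  (forall A, Sig A -> 0 <= mu A) /\
  (forall A B, Sig A -> Sig B -> (forall x, A x -> B x -> False) ->
     mu (fun x => A x \/ B x) = mu A + mu B).

Definition DeltaK {M : Type} (Sig : (M -> Prop) -> Prop) : Type :=
  { mu : (M -> Prop) -> R | fa_prob Sig mu }.

Definition meq {M : Type} {Sig : (M -> Prop) -> Prop} (mu nu : DeltaK Sig) : Prop :=
  forall A, Sig A -> proj1_sig mu A = proj1_sig nu A.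

Definition Delta_gens {M : Type} (Sig : (M -> Prop) -> Prop)
  : (DeltaK Sig -> Prop) -> Prop :=
  fun B => exists E p, Sig E /\ 0 <= p <= 1 /\
             B = (fun mu : DeltaK Sig => p <= proj1_sig mu E).

Definition Delta_field (K : Type) {M : Type} (Sig : (M -> Prop) -> Prop)
  : (DeltaK Sig -> Prop) -> Prop :=
  kfield_gen K (Delta_gens Sig).

Definition is_type_space (K : Type) {S I : Type} (SigS : (S -> Prop) -> Prop)
  {M : Type} (Sig : (M -> Prop) -> Prop) (T : I -> M -> DeltaK Sig)
  (theta : M -> S) : Prop :=
  inhabited M /\ kfield K Sig /\
  (forall i B, Delta_field K Sig B -> Sig (fun m => B (T i m))) /\
  (forall i m A, Sig A ->
     (forall m', meq (T i m') (T i m) -> A m') -> proj1_sig (T i m) A = 1) /\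
  (forall E, SigS E -> Sig (fun m => E (theta m))).

(** * kappa-expressions.  A conjunction over a nonempty set of fewer than
    kappa expressions is represented by a family indexed by a nonempty small
    subset of K. *)
Inductive Phi (K S I : Type) (SigS : (S -> Prop) -> Prop) : Type :=
| PAtom : { E : S -> Prop | SigS E } -> Phi K S I SigS
| PNeg : Phi K S I SigS -> Phi K S I SigS
| PBel : I -> { p : R | 0 <= p <= 1 } -> Phi K S I SigS -> Phi K S I SigS
| PConj : forall P : K -> Prop, (exists k, P k) -> small P ->
          (sig P -> Phi K S I SigS) -> Phi K S I SigS.

Arguments PAtom {K S I SigS}.
Arguments PNeg {K S I SigS}.
Arguments PBel {K S I SigS}.
Arguments PConj {K S I SigS}.

Fixpoint sem {K S I : Type} {SigS : (S -> Prop) -> Prop}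
  {M : Type} {Sig : (M -> Prop) -> Prop} (T : I -> M -> DeltaK Sig)
  (theta : M -> S) (phi : Phi K S I SigS) {struct phi} : M -> Prop :=
  match phi with
  | PAtom E => fun m => proj1_sig E (theta m)
  | PNeg psi => fun m => ~ sem T theta psi m
  | PBel i p psi => fun m => proj1_sig p <= proj1_sig (T i m) (sem T theta psi)
  | PConj _ _ _ f => fun m => forall j, sem T theta (f j) m
  end.

Definition descr (K : Type) {S I : Type} (SigS : (S -> Prop) -> Prop)
  {M : Type} {Sig : (M -> Prop) -> Prop} (T : I -> M -> DeltaK Sig)
  (theta : M -> S) (m : M) : Phi K S I SigS -> Prop :=
  fun phi => sem T theta phi m.

Definition Omega_pred (K S I : Type) (SigS : (S -> Prop) -> Prop)
  : (Phi K S I SigS -> Prop) -> Prop :=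
  fun w => exists (M : Type) (Sig : (M -> Prop) -> Prop)
             (T : I -> M -> DeltaK Sig) (theta : M -> S),
             is_type_space K SigS Sig T theta /\
             exists m, w = descr K SigS T theta m.

Definition Omega (K S I : Type) (SigS : (S -> Prop) -> Prop) : Type :=
  sig (Omega_pred K S I SigS).

Definition SigOmega (K S I : Type) (SigS : (S -> Prop) -> Prop)
  : (Omega K S I SigS -> Prop) -> Prop :=
  fun A => exists phi : Phi K S I SigS,
             A = (fun w : Omega K S I SigS => proj1_sig w phi).

Definition Dmap (K : Type) {S I : Type} (SigS : (S -> Prop) -> Prop)
  {M : Type} {Sig : (M -> Prop) -> Prop} {T : I -> M -> DeltaK Sig}
  {theta : M -> S} (H : is_type_space K SigS Sig T theta) (m : M)
  : Omega K S I SigS :=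
  exist _ (descr K SigS T theta m)
    (ex_intro _ M (ex_intro _ Sig (ex_intro _ T (ex_intro _ theta
       (conj H (ex_intro _ m eq_refl)))))).

Definition separating {S : Type} (SigS : (S -> Prop) -> Prop) : Prop :=
  forall s s', s <> s' -> exists E, SigS E /\ E s /\ ~ E s'.

(** The belief [T_i(m)] of a state is determined, on the sets [[phi]], by the
    description [D(m)] alone: [B_i^p phi] belongs to [D(m)] exactly when
    [p <= T_i(m)(phi^M)], and a number in [[0,1]] is determined by the
    [p in [0,1]] below it.  So [T_i^*(w)] may be computed in any type space
    and state that realise [w], as the image of [T_i(m)] under [D]. *)

From Stdlib Require Import Reals Lra.
From Stdlib Require Import IndefiniteDescription FunctionalExtensionality PropExtensionality Classical.
Open Scope R_scope.

Lemma fa_prob_ge0 {M : Type} (Sig : (M -> Prop) -> Prop) (mu : DeltaK Sig) A :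
  Sig A -> 0 <= proj1_sig mu A.
Proof. intro HA; destruct mu as [mu Hmu]; simpl; apply Hmu, HA. Qed.

Lemma fa_prob_le1 {M : Type} (Sig : (M -> Prop) -> Prop) (mu : DeltaK Sig) A :
  Sig A -> Sig (fun x => ~ A x) -> proj1_sig mu A <= 1.
Proof.
  intros HA HnA; destruct mu as [mu Hmu]; simpl.
  destruct Hmu as [Htot [Hge0 Hadd]].
  assert (Hsplit : mu (fun x => A x \/ ~ A x) = mu A + mu (fun x => ~ A x)).
  { apply Hadd; auto. }
  replace (fun x => A x \/ ~ A x) with (fun _ : M => True) in Hsplit.
  - specialize (Hge0 _ HnA); lra.
  - apply functional_extensionality; intro x.
    apply propositional_extensionality; split; auto using classic.
Qed.

Lemma fa_prob_pushforward {M N : Type} (Sig : (M -> Prop) -> Prop)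
  (SigN : (N -> Prop) -> Prop) (f : M -> N) (mu : (M -> Prop) -> R) :
  (forall A, SigN A -> Sig (fun m => A (f m))) ->
  fa_prob Sig mu -> fa_prob SigN (fun A => mu (fun m => A (f m))).
Proof.
  intros Hf [Htot [Hge0 Hadd]]; split; [exact Htot | split].
  - intros A HA; apply Hge0, Hf, HA.
  - intros A B HA HB Hdisj.
    apply (Hadd (fun m => A (f m)) (fun m => B (f m))); [apply Hf, HA | apply Hf, HB |].
    intro m; apply Hdisj.
Qed.

Lemma Rle_unit_ext (a b : R) :
  0 <= a <= 1 -> 0 <= b <= 1 ->
  (forall p, 0 <= p <= 1 -> (p <= a <-> p <= b)) -> a = b.
Proof.
  intros Ha Hb Hab; apply Rle_antisym.
  - apply (Hab a Ha); lra.
  - apply (Hab b Hb); lra.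
Qed.

Section TypeSpace.

Variables (K S I : Type) (SigS : (S -> Prop) -> Prop).
Variables (M : Type) (Sig : (M -> Prop) -> Prop)
  (T : I -> M -> DeltaK Sig) (theta : M -> S).
Hypothesis HM : is_type_space K SigS Sig T theta.

Lemma sem_measurable (phi : Phi K S I SigS) : Sig (sem T theta phi).
Proof.
  destruct HM as [_ [[_ [HcSig HcapSig]] [HT [_ Htheta]]]].
  induction phi as [E | psi IH | j p psi IH | P Pne Psmall f IH]; simpl.
  - apply Htheta, (proj2_sig E).
  - apply HcSig, IH.
  - apply (HT j (fun mu => proj1_sig p <= proj1_sig mu (sem T theta psi))).
    intros F _ Hgens; apply Hgens.
    exists (sem T theta psi), (proj1_sig p).
    split; [exact IH | split; [exact (proj2_sig p) | reflexivity]].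
  - apply (HcapSig P (fun j => sem T theta (f j)) Pne Psmall), IH.
Qed.

Lemma Dmap_measurable (A : Omega K S I SigS -> Prop) :
  SigOmega K S I SigS A -> Sig (fun m => A (Dmap K SigS HM m)).
Proof. intros [phi ->]; apply sem_measurable. Qed.

Lemma belief_sem_unit (i : I) (m : M) (phi : Phi K S I SigS) :
  0 <= proj1_sig (T i m) (sem T theta phi) <= 1.
Proof.
  split; [apply fa_prob_ge0, sem_measurable |].
  apply fa_prob_le1; [apply sem_measurable | apply (sem_measurable (PNeg phi))].
Qed.

Definition belief_image (i : I) (m : M) : DeltaK (SigOmega K S I SigS) :=
  exist _ (fun A => proj1_sig (T i m) (fun m' => A (Dmap K SigS HM m')))
    (fa_prob_pushforward Sig _ _ _ Dmap_measurable (proj2_sig (T i m))).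

End TypeSpace.

Lemma belief_sem_descr_eq (K S I : Type) (SigS : (S -> Prop) -> Prop) (i : I)
  (M : Type) (Sig : (M -> Prop) -> Prop) (T : I -> M -> DeltaK Sig) (theta : M -> S)
  (M' : Type) (Sig' : (M' -> Prop) -> Prop) (T' : I -> M' -> DeltaK Sig') (theta' : M' -> S) :
  is_type_space K SigS Sig T theta -> is_type_space K SigS Sig' T' theta' ->
  forall m m', descr K SigS T theta m = descr K SigS T' theta' m' ->
  forall phi : Phi K S I SigS,
    proj1_sig (T i m) (sem T theta phi) = proj1_sig (T' i m') (sem T' theta' phi).
Proof.
  intros HM HM' m m' Hdescr phi.
  apply Rle_unit_ext; [apply belief_sem_unit; exact HM | apply belief_sem_unit; exact HM' |].
  intros p Hp.
  change (descr K SigS T theta m (PBel i (exist _ p Hp) phi) <->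
          descr K SigS T' theta' m' (PBel i (exist _ p Hp) phi)).
  rewrite Hdescr; reflexivity.
Qed.

Record pointed_type_space (K S I : Type) (SigS : (S -> Prop) -> Prop) := {
  pt_M : Type;
  pt_Sig : (pt_M -> Prop) -> Prop;
  pt_T : I -> pt_M -> DeltaK pt_Sig;
  pt_theta : pt_M -> S;
  pt_is_type_space : is_type_space K SigS pt_Sig pt_T pt_theta;
  pt_state : pt_M
}.

Arguments pt_T {K S I SigS}.
Arguments pt_theta {K S I SigS}.
Arguments pt_is_type_space {K S I SigS}.
Arguments pt_state {K S I SigS}.

Definition pt_descr {K S I : Type} {SigS : (S -> Prop) -> Prop}
  (x : pointed_type_space K S I SigS) : Phi K S I SigS -> Prop :=
  descr K SigS (pt_T x) (pt_theta x) (pt_state x).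

Definition realisation {K S I : Type} {SigS : (S -> Prop) -> Prop}
  (w : Omega K S I SigS) :
  { x : pointed_type_space K S I SigS | proj1_sig w = pt_descr x }.
Proof.
  apply constructive_indefinite_description.
  destruct w as [w [M [Sig [T [theta [HM [m ->]]]]]]].
  exists (Build_pointed_type_space K S I SigS M Sig T theta HM m); reflexivity.
Defined.

Definition Tstar {K S I : Type} {SigS : (S -> Prop) -> Prop} (i : I)
  (w : Omega K S I SigS) : DeltaK (SigOmega K S I SigS) :=
  let x := proj1_sig (realisation w) in
  belief_image K S I SigS _ _ (pt_T x) (pt_theta x) (pt_is_type_space x) i (pt_state x).

(* The hypotheses on [K], [I] and [S] are the paper's standing assumptions;
   [T_i^*] exists without them. *)
Theorem proposition3 (K : Type) (I : Type) (S : Type)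
  (SigS : (S -> Prop) -> Prop) :
  regular_infinite_card K ->
  inhabited I ->
  inhabited S -> kfield K SigS ->
  separating SigS ->
  forall i : I,
  exists Tstar : Omega K S I SigS -> DeltaK (SigOmega K S I SigS),
    forall (M : Type) (Sig : (M -> Prop) -> Prop)
           (T : I -> M -> DeltaK Sig) (theta : M -> S)
           (H : is_type_space K SigS Sig T theta) (m : M)
           (A : Omega K S I SigS -> Prop),
      SigOmega K S I SigS A ->
      proj1_sig (Tstar (Dmap K SigS H m)) A =
      proj1_sig (T i m) (fun m' => A (Dmap K SigS H m')).
Proof.
  intros _ _ _ _ _ i.
  exists (Tstar i).
  intros M Sig T theta H m A [phi ->].
  unfold Tstar; destruct (realisation (Dmap K SigS H m)) as [x Hx]; simpl.
  exact (belief_sem_descr_eq K S I SigS i _ _ _ _ _ _ _ _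
           (pt_is_type_space x) H (pt_state x) m (eq_sym Hx) phi).
Qed.
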